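(* Let $I_{-1}:=\iint_T\frac{dx\,dy}{xy(-\ln xy)}$ and, for $n\ge0$, $I_n:=\iint_T \frac{(-\ln xy)^n}{xy}\,dx\,dy$. Then \[ I_{-1}=\sum_{n=0}^\infty(-1)^n\frac{I_n}{(n+1)!}+\int_0^1\frac{\operatorname{li}(x-x^2)}{x}\,dx+1, \] where the series converges.
   Context: $T:=\{(x,y)\in[0,1]^2 : x+y\ge 1\}$. The logarithmic integral is $\operatorname{li}(u):=\int_0^u\frac{dv}{\ln v}$ for $0<u<1$. *)

From Stdlib Require Import Reals.
Open Scope R_scope.

Definition improper_int (f : R -> R) (a b l : R) : Prop :=
  (forall c d, a < c -> c <= d -> d < b -> inhabited (Riemann_integrable f c d)) /\
  (forall eps, 0 < eps -> exists delta, 0 < delta /\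
     forall c d (pr : Riemann_integrable f c d),
       a < c -> c < a + delta -> b - delta < d -> d < b -> c <= d ->
       Rabs (RiemannInt pr - l) < eps).

(* Integral over T = {(x,y) in [0,1]^2 : x + y >= 1}, computed as the
   iterated (improper) integral  int_0^1 ( int_{1-x}^1 f x y dy ) dx.
   (All integrands considered are nonnegative on T, so by Tonelli this is
   the double integral.) *)
Definition int_T (f : R -> R -> R) (l : R) : Prop :=
  exists g : R -> R,
    (forall x, 0 < x < 1 -> improper_int (fun y => f x y) (1 - x) 1 (g x)) /\
    improper_int g 0 1 l.

Definition li_is (u l : R) : Prop := improper_int (fun v => / ln v) 0 u l.

From Stdlib Require Import Reals Lra Lia Factorial IndefiniteDescription.
From Coquelicot Require Import Coquelicot.
Open Scope R_scope.

(* Integrating first in [y], the sections of T give explicit inner integrals: with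
   [L1 = - ln x] and [L2 = - ln (x (1 - x))], the integrand of I_n becomes
   [(L2^(n+1) - L1^(n+1)) / ((n+1) x)] and that of I_(-1) becomes [(ln L2 - ln L1) / x].
   For [Phi t = ln t - li (exp (- t))] one has [Phi' t = (1 - exp (- t)) / t
   = sum_n (-1)^n t^n / (n+1)!], and
     (ln L2 - ln L1) / x = (Phi L2 - Phi L1) / x + (li (x (1 - x)) - li x) / x.
   Integrating the series of [Phi'] termwise between [L1] and [L2] produces
   [sum_n (-1)^n I_n / (n+1)!]; the Taylor remainder after N terms integrates to at
   most [I_(N+1) / (N+2)!], which is [<= 8 / (N+2)] because [I_n <= 8 n!].  Finally
   [li x ln x - x] is a primitive of [li x / x] with limits [0] at [0] and [-1] at [1]. *)

(** * Improper integrals over an open interval *)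

(* [improper_int] restated with Coquelicot's total [RInt], for which linearity,
   monotonicity and the fundamental theorem are available. *)
Definition is_RInt_open (f : R -> R) (a b l : R) : Prop :=
  (forall c d, a < c -> c <= d -> d < b -> ex_RInt f c d) /\
  (forall eps, 0 < eps -> exists delta, 0 < delta /\
     forall c d, a < c -> c < a + delta -> b - delta < d -> d < b -> c <= d ->
       Rabs (RInt f c d - l) < eps).

Lemma is_RInt_open_improper_int f a b l :
  is_RInt_open f a b l -> improper_int f a b l.
Proof.
  intros [Hex Hlim]; split.
  - intros c d Hc Hcd Hd. constructor. apply ex_RInt_Reals_0. auto.
  - intros eps Heps. destruct (Hlim eps Heps) as [delta [Hdelta H]].
    exists delta; split; auto. intros c d pr. rewrite <- RInt_Reals. apply H.
Qed.

Lemma is_RInt_open_ext f g a b l :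
  (forall x, a < x < b -> f x = g x) -> is_RInt_open f a b l -> is_RInt_open g a b l.
Proof.
  intros Efg [Hex Hlim].
  assert (Eint : forall c d, a < c -> c <= d -> d < b ->
    forall x, Rmin c d < x < Rmax c d -> f x = g x).
  { intros c d Hc Hcd Hd x Hx.
    rewrite Rmin_left, Rmax_right in Hx by lra. apply Efg. lra. }
  split.
  - intros c d Hc Hcd Hd. apply (ex_RInt_ext f g c d); [apply Eint|]; auto.
  - intros eps Heps. destruct (Hlim eps Heps) as [delta [Hdelta H]].
    exists delta; split; auto. intros c d Hc1 Hc2 Hd1 Hd2 Hcd.
    rewrite <- (RInt_ext f) by (apply Eint; lra). auto.
Qed.

Lemma is_RInt_open_plus f g a b l m :
  is_RInt_open f a b l -> is_RInt_open g a b m ->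
  is_RInt_open (fun x => f x + g x) a b (l + m).
Proof.
  intros [Fex Flim] [Gex Glim]; split.
  - intros c d Hc Hcd Hd. apply (ex_RInt_plus f g); auto.
  - intros eps Heps.
    destruct (Flim (eps / 2)) as [d1 [Hd1 H1]]; [lra|].
    destruct (Glim (eps / 2)) as [d2 [Hd2 H2]]; [lra|].
    exists (Rmin d1 d2); split; [apply Rmin_pos; auto|].
    intros c d Hc1 Hc2 Hdd1 Hdd2 Hcd.
    pose proof (Rmin_l d1 d2). pose proof (Rmin_r d1 d2).
    rewrite (RInt_plus f g) by auto. unfold plus; simpl.
    specialize (H1 c d Hc1 ltac:(lra) ltac:(lra) Hdd2 Hcd).
    specialize (H2 c d Hc1 ltac:(lra) ltac:(lra) Hdd2 Hcd).
    apply Rabs_def2 in H1; apply Rabs_def2 in H2. apply Rabs_def1; lra.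
Qed.

Lemma is_RInt_open_scal k f a b l :
  is_RInt_open f a b l -> is_RInt_open (fun x => k * f x) a b (k * l).
Proof.
  intros [Fex Flim]; split.
  - intros c d Hc Hcd Hd. apply (ex_RInt_scal f); auto.
  - intros eps Heps.
    assert (Hk : 0 < Rabs k + 1) by (pose proof (Rabs_pos k); lra).
    destruct (Flim (eps / (Rabs k + 1))) as [delta [Hdelta H]].
    { apply Rdiv_lt_0_compat; lra. }
    exists delta; split; auto. intros c d Hc1 Hc2 Hd1 Hd2 Hcd.
    specialize (H c d Hc1 Hc2 Hd1 Hd2 Hcd).
    rewrite (RInt_scal f) by auto. unfold scal; simpl; unfold mult; simpl.
    replace (k * RInt f c d - k * l) with (k * (RInt f c d - l)) by ring.
    rewrite Rabs_mult.
    apply Rle_lt_trans with ((Rabs k + 1) * Rabs (RInt f c d - l)).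
    + apply Rmult_le_compat_r; [apply Rabs_pos | lra].
    + apply Rmult_lt_reg_l with (/ (Rabs k + 1)); [apply Rinv_0_lt_compat; lra|].
      rewrite <- Rmult_assoc, Rinv_l by lra. unfold Rdiv in H. lra.
Qed.

Lemma exists_interval_near_ends a b delta : a < b -> 0 < delta ->
  exists c d, a < c /\ c < a + delta /\ b - delta < d /\ d < b /\ c <= d.
Proof.
  intros Hab Hdelta. set (e := Rmin delta ((b - a) / 2) / 2).
  assert (0 < Rmin delta ((b - a) / 2)) by (apply Rmin_pos; lra).
  pose proof (Rmin_l delta ((b - a) / 2)). pose proof (Rmin_r delta ((b - a) / 2)).
  exists (a + e), (b - e). unfold e; repeat split; lra.
Qed.

Lemma is_RInt_open_ub f a b l B : a < b -> is_RInt_open f a b l ->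
  (forall c d, a < c -> c <= d -> d < b -> RInt f c d <= B) -> l <= B.
Proof.
  intros Hab [_ Flim] HB.
  destruct (Rle_or_lt l B) as [|Hlt]; auto. exfalso.
  destruct (Flim ((l - B) / 2)) as [delta [Hdelta H]]; [lra|].
  destruct (exists_interval_near_ends a b delta) as [c [d [? [? [? [? ?]]]]]]; auto.
  specialize (H c d ltac:(lra) ltac:(lra) ltac:(lra) ltac:(lra) ltac:(lra)).
  specialize (HB c d ltac:(lra) ltac:(lra) ltac:(lra)).
  apply Rabs_def2 in H. lra.
Qed.

Lemma is_RInt_open_le f g a b l m : a < b ->
  is_RInt_open f a b l -> is_RInt_open g a b m ->
  (forall x, a < x < b -> f x <= g x) -> l <= m.
Proof.
  intros Hab Hf Hg Hfg.
  assert (Hd := is_RInt_open_plus _ _ _ _ _ _ Hf (is_RInt_open_scal (-1) _ _ _ _ Hg)).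
  cut (l + -1 * m <= 0); [lra|].
  apply (is_RInt_open_ub _ a b _ 0 Hab Hd).
  intros c d Hc Hcd Hd'.
  destruct Hf as [Fex _]; destruct Hg as [Gex _].
  rewrite (RInt_plus f) by (auto; apply (ex_RInt_scal g); auto).
  rewrite (RInt_scal g) by auto. unfold plus, scal; simpl; unfold mult; simpl.
  assert (RInt f c d <= RInt g c d) by (apply RInt_le; auto; intros; apply Hfg; lra).
  lra.
Qed.

Lemma ex_derive_continuous_R (f : R -> R) x : ex_derive f x -> continuous f x.
Proof. apply (ex_derive_continuous f x). Qed.

Lemma is_derive_eq (f : R -> R) (x l l' : R) : is_derive f x l -> l = l' -> is_derive f x l'.
Proof. intros H <-; auto. Qed.

Definition continuous_between (f : R -> R) (a b : R) : Prop :=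
  forall x, a < x < b -> continuous f x.

Lemma ex_RInt_between f a b c d : continuous_between f a b ->
  a < c -> c <= d -> d < b -> ex_RInt f c d.
Proof.
  intros Hf Hc Hcd Hd. apply (ex_RInt_continuous (V := R_CompleteNormedModule)).
  intros z Hz. rewrite Rmin_left, Rmax_right in Hz by lra. apply Hf; lra.
Qed.

Lemma RInt_le_superinterval f a b c c0 d0 d : continuous_between f a b ->
  (forall x, a < x < b -> 0 <= f x) ->
  a < c -> c <= c0 -> c0 <= d0 -> d0 <= d -> d < b -> RInt f c0 d0 <= RInt f c d.
Proof.
  intros Hf Hpos Hc Hcc0 Hc0d0 Hd0d Hd.
  assert (e1 : ex_RInt f c c0) by (eapply ex_RInt_between; eauto; lra).
  assert (e2 : ex_RInt f c0 d0) by (eapply ex_RInt_between; eauto; lra).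
  assert (e3 : ex_RInt f d0 d) by (eapply ex_RInt_between; eauto; lra).
  rewrite <- (RInt_Chasles f c d0 d) by (auto; eapply ex_RInt_Chasles; eauto).
  rewrite <- (RInt_Chasles f c c0 d0) by auto. unfold plus; simpl.
  assert (0 <= RInt f c c0) by (apply RInt_ge_0; auto; intros; apply Hpos; lra).
  assert (0 <= RInt f d0 d) by (apply RInt_ge_0; auto; intros; apply Hpos; lra).
  lra.
Qed.

(* The improper integral is the supremum of the integrals over compact subintervals. *)
Lemma ex_RInt_open_bounded f a b B : a < b -> continuous_between f a b ->
  (forall x, a < x < b -> 0 <= f x) ->
  (forall c d, a < c -> c <= d -> d < b -> RInt f c d <= B) ->
  exists l, is_RInt_open f a b l.
Proof.
  intros Hab Hf Hpos HB.
  set (E := fun r => exists c d, a < c /\ c <= d /\ d < b /\ r = RInt f c d).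
  assert (Hbound : bound E) by (exists B; intros r [c [d [? [? [? ->]]]]]; auto).
  assert (Hne : exists r, E r).
  { exists (RInt f ((a + b) / 2) ((a + b) / 2)), ((a + b) / 2), ((a + b) / 2).
    repeat split; lra. }
  destruct (completeness E Hbound Hne) as [l [Hub Hlub]].
  exists l; split; [intros; eapply ex_RInt_between; eauto|].
  intros eps Heps.
  assert (exists c0 d0, a < c0 /\ c0 <= d0 /\ d0 < b /\ l - eps < RInt f c0 d0)
    as [c0 [d0 [? [? [? Hgt]]]]].
  { apply Classical_Prop.NNPP. intro Hn.
    assert (l <= l - eps); [|lra].
    apply Hlub. intros r [c [d [? [? [? ->]]]]].
    apply Rnot_lt_le. intro. apply Hn. exists c, d. repeat split; auto. }
  exists (Rmin (c0 - a) (b - d0)). split; [apply Rmin_pos; lra|].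
  intros c d Hc1 Hc2 Hd1 Hd2 Hcd.
  pose proof (Rmin_l (c0 - a) (b - d0)). pose proof (Rmin_r (c0 - a) (b - d0)).
  assert (RInt f c d <= l) by (apply Hub; exists c, d; repeat split; auto).
  assert (RInt f c0 d0 <= RInt f c d)
    by (apply (RInt_le_superinterval f a b); auto; lra).
  apply Rabs_def1; lra.
Qed.

Lemma RInt_primitive F f c d : c <= d ->
  (forall x, c <= x <= d -> is_derive F x (f x)) ->
  (forall x, c <= x <= d -> continuous f x) -> RInt f c d = F d - F c.
Proof.
  intros Hcd HD HC. apply is_RInt_unique, (is_RInt_derive F f);
    intros x Hx; rewrite Rmin_left, Rmax_right in Hx by lra; auto.
Qed.

Lemma is_RInt_open_primitive F f a b A B : a < b ->
  (forall x, a < x < b -> is_derive F x (f x)) -> continuous_between f a b ->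
  (forall eps, 0 < eps -> exists delta, 0 < delta /\
     forall x, a < x < a + delta -> x < b -> Rabs (F x - A) < eps) ->
  (forall eps, 0 < eps -> exists delta, 0 < delta /\
     forall x, b - delta < x < b -> a < x -> Rabs (F x - B) < eps) ->
  is_RInt_open f a b (B - A).
Proof.
  intros Hab HD Hf LA LB. split; [intros; eapply ex_RInt_between; eauto|].
  intros eps Heps.
  destruct (LA (eps / 2)) as [d1 [Hd1 H1]]; [lra|].
  destruct (LB (eps / 2)) as [d2 [Hd2 H2]]; [lra|].
  exists (Rmin d1 d2); split; [apply Rmin_pos; auto|].
  intros c d Hc1 Hc2 Hdd1 Hdd2 Hcd.
  pose proof (Rmin_l d1 d2). pose proof (Rmin_r d1 d2).
  rewrite (RInt_primitive F f c d Hcd) by (intros; (apply HD || apply Hf); lra).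
  specialize (H1 c ltac:(lra) ltac:(lra)). specialize (H2 d ltac:(lra) ltac:(lra)).
  apply Rabs_def2 in H1; apply Rabs_def2 in H2. apply Rabs_def1; lra.
Qed.

Lemma continuous_eps_delta F x : continuous F x -> forall eps, 0 < eps ->
  exists delta, 0 < delta /\ forall y, Rabs (y - x) < delta -> Rabs (F y - F x) < eps.
Proof.
  intros H eps Heps.
  apply (proj2 (continuity_pt_filterlim F x)) in H.
  destruct (H eps Heps) as [delta [Hdelta HF]]. exists delta; split; auto.
  intros y Hy. destruct (Req_dec y x) as [->|Hne].
  - rewrite Rminus_eq_0, Rabs_R0; auto.
  - apply HF. unfold D_x, no_cond; repeat split; auto.
Qed.

Lemma is_RInt_open_primitive_closed F f a b : a < b ->
  (forall x, a <= x <= b -> is_derive F x (f x)) ->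
  (forall x, a <= x <= b -> continuous f x) -> is_RInt_open f a b (F b - F a).
Proof.
  intros Hab HD Hf.
  assert (HF : forall x, a <= x <= b -> continuous F x)
    by (intros x Hx; apply ex_derive_continuous_R; eexists; apply HD; auto).
  apply (is_RInt_open_primitive F f a b (F a) (F b)); auto.
  - intros; apply HD; lra.
  - intros x Hx; apply Hf; lra.
  - intros eps Heps.
    destruct (continuous_eps_delta F a (HF a ltac:(lra)) eps Heps) as [d [Hd H]].
    exists d; split; auto. intros x Hx _. apply H. rewrite Rabs_right; lra.
  - intros eps Heps.
    destruct (continuous_eps_delta F b (HF b ltac:(lra)) eps Heps) as [d [Hd H]].
    exists d; split; auto. intros x Hx _. apply H. rewrite Rabs_left; lra.
Qed.

(** * The logarithmic integral *)

Lemma ln_lt_0 v : 0 < v < 1 -> ln v < 0.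
Proof. intros Hv. rewrite <- ln_1. apply ln_increasing; lra. Qed.

(* Junk value of Stdlib's [ln] off its domain. *)
Lemma ln_nonpos v : v <= 0 -> ln v = 0.
Proof. intros Hv. unfold ln. destruct (Rlt_dec 0 v); [exfalso; lra | reflexivity]. Qed.

Definition inv_ln (v : R) : R := / ln v.

(* Because of the junk values, [inv_ln] vanishes on [v <= 0] and is continuous on
   the whole half-line [v < 1], including at [0] where [1 / ln v -> 0]. *)
Lemma inv_ln_continuous v : v < 1 -> continuous inv_ln v.
Proof.
  intros Hv. destruct (Rlt_or_le v 0) as [Hneg|Hnn].
  - apply (continuous_ext_loc inv_ln (fun _ => 0)); [|apply continuous_const].
    exists (mkposreal (- v) ltac:(lra)). intros y Hy.
    unfold ball in Hy; simpl in Hy; unfold AbsRing_ball, abs, minus, plus, opp in Hy; simpl in Hy.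
    apply Rabs_def2 in Hy. unfold inv_ln. rewrite (ln_nonpos y), Rinv_0 by lra. reflexivity.
  - destruct (Rle_lt_or_eq_dec 0 v Hnn) as [Hpos|<-].
    + apply ex_derive_continuous_R. unfold inv_ln. auto_derive.
      pose proof (ln_lt_0 v). repeat split; lra.
    + apply (proj1 (continuity_pt_filterlim inv_ln 0)).
      intros eps Heps. exists (exp (- / eps)). split; [apply exp_pos|].
      intros y [_ Hy]. simpl in *. unfold R_dist in *. rewrite Rminus_0_r in Hy.
      unfold inv_ln. rewrite (ln_nonpos 0), Rinv_0, Rminus_0_r by lra.
      destruct (Rle_or_lt y 0) as [Hy0|Hy0].
      * rewrite ln_nonpos, Rinv_0, Rabs_R0 by auto. auto.
      * rewrite Rabs_right in Hy by lra.
        assert (ln y < - / eps) by (rewrite <- (ln_exp (- / eps)); apply ln_increasing; auto).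
        assert (0 < / eps) by (apply Rinv_0_lt_compat; auto).
        rewrite Rabs_left by (apply Rinv_lt_0_compat; lra).
        rewrite <- (Rinv_inv eps), <- Rinv_opp. apply Rinv_lt_contravar; nra.
Qed.

Lemma ex_RInt_inv_ln a b : a < 1 -> b < 1 -> ex_RInt inv_ln a b.
Proof.
  intros Ha Hb. apply (ex_RInt_continuous (V := R_CompleteNormedModule)).
  intros z Hz. apply inv_ln_continuous. pose proof (Rmax_lub_lt a b 1 Ha Hb). lra.
Qed.

Definition li (u : R) : R := RInt inv_ln 0 u.

Lemma li_derive u : u < 1 -> is_derive li u (inv_ln u).
Proof.
  intros Hu. apply (is_derive_RInt inv_ln li 0 u); [|apply inv_ln_continuous; auto].
  exists (mkposreal (1 - u) ltac:(lra)). intros y Hy.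
  unfold ball in Hy; simpl in Hy; unfold AbsRing_ball, abs, minus, plus, opp in Hy; simpl in Hy.
  apply Rabs_def2 in Hy. apply (RInt_correct (V := R_CompleteNormedModule)).
  apply ex_RInt_inv_ln; lra.
Qed.

Lemma li_0 : li 0 = 0.
Proof. unfold li. rewrite RInt_point. reflexivity. Qed.

Lemma li_is_li u : 0 < u < 1 -> li_is u (li u).
Proof.
  intros Hu. apply is_RInt_open_improper_int.
  replace (li u) with (li u - li 0) by (rewrite li_0; ring).
  apply is_RInt_open_primitive_closed; [lra| |].
  - intros; apply li_derive; lra.
  - intros; apply inv_ln_continuous; lra.
Qed.

Lemma RInt_inv_ln_bounds a x : 0 <= a <= x -> 0 < x < 1 ->
  - ((x - a) / (- ln x)) <= RInt inv_ln a x <= 0.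
Proof.
  intros Hax Hx. pose proof (ln_lt_0 x Hx).
  assert (Hv : forall v, a < v < x -> - / (- ln x) <= inv_ln v <= 0).
  { intros v Hv. assert (ln v < 0) by (apply ln_lt_0; lra).
    assert (ln v <= ln x) by (apply ln_le; lra).
    unfold inv_ln. split.
    - assert (/ (- ln v) <= / (- ln x)) by (apply Rinv_le_contravar; lra).
      rewrite !Rinv_opp in *. lra.
    - left. apply Rinv_lt_0_compat; auto. }
  assert (Hex : ex_RInt inv_ln a x) by (apply ex_RInt_inv_ln; lra).
  assert (Hc : forall c, RInt (fun _ => c) a x = (x - a) * c)
    by (intros; rewrite RInt_const; reflexivity).
  split.
  - assert (RInt (fun _ => - / (- ln x)) a x <= RInt inv_ln a x)
      by (apply RInt_le; [lra | apply ex_RInt_const | exact Hex | intros; apply Hv; auto]).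
    rewrite Hc in H0. unfold Rdiv. lra.
  - assert (RInt inv_ln a x <= RInt (fun _ => 0) a x)
      by (apply RInt_le; [lra | exact Hex | apply ex_RInt_const | intros; apply Hv; auto]).
    rewrite Hc in H0. lra.
Qed.

Lemma li_bounds x : 0 < x < 1 -> - (x / (- ln x)) <= li x <= 0.
Proof.
  intros Hx. pose proof (RInt_inv_ln_bounds 0 x) as H. rewrite Rminus_0_r in H.
  apply H; lra.
Qed.

Lemma bernoulli_ineq x k : 0 <= x <= 1 -> 1 - INR k * (1 - x) <= x ^ k.
Proof.
  intros Hx. induction k as [|k IH]; [simpl; lra|].
  rewrite S_INR. simpl. pose proof (pow_le x k ltac:(lra)). pose proof (pos_INR k).
  destruct (Rle_or_lt 0 (1 - INR k * (1 - x))).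
  - assert (x * (1 - INR k * (1 - x)) <= x * x ^ k) by (apply Rmult_le_compat_l; lra).
    assert (0 <= INR k * ((1 - x) * (1 - x))) by (apply Rmult_le_pos; nra).
    nra.
  - nra.
Qed.

Lemma li_mul_ln_bounds x : 0 < x < 1 -> 0 <= li x * ln x <= x.
Proof.
  intros Hx. pose proof (ln_lt_0 x Hx). destruct (li_bounds x Hx) as [Hlo Hhi].
  replace (li x * ln x) with ((- li x) * (- ln x)) by ring.
  split; [apply Rmult_le_pos; lra|].
  apply Rle_trans with (x / (- ln x) * (- ln x)).
  - apply Rmult_le_compat_r; lra.
  - right; field; lra.
Qed.

(* Splitting [li x = li (x^k) + RInt inv_ln (x^k) x] gives [li x ln x] up to
   [x^k / k + (x - x^k)], and Bernoulli bounds [x - x^k]. *)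
Lemma li_mul_ln_le x k : 0 < x < 1 -> (1 <= k)%nat ->
  li x * ln x <= / INR k + INR k * (1 - x).
Proof.
  intros Hx Hk. pose proof (ln_lt_0 x Hx) as Hl.
  assert (Hk0 : 1 <= INR k) by (apply (le_INR 1); auto).
  assert (Hxk : 0 < x ^ k) by (apply pow_lt; lra).
  assert (Hxk1 : x ^ k <= x).
  { destruct k; [lia|]. simpl.
    assert (x ^ k <= 1) by (rewrite <- (pow1 k); apply pow_incr; lra). nra. }
  destruct (li_bounds (x ^ k) ltac:(lra)) as [Hhead _].
  rewrite ln_pow in Hhead by lra.
  destruct (RInt_inv_ln_bounds (x ^ k) x ltac:(lra) Hx) as [Htail _].
  assert (Hsplit : li x = li (x ^ k) + RInt inv_ln (x ^ k) x).
  { unfold li. rewrite <- (RInt_Chasles inv_ln 0 (x ^ k) x)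
      by (apply ex_RInt_inv_ln; lra). reflexivity. }
  set (L := - ln x) in *. assert (HL : 0 < L) by (unfold L; lra).
  pose proof (bernoulli_ineq x k ltac:(lra)).
  assert (- li x <= (x ^ k / INR k + (x - x ^ k)) / L).
  { replace (- (INR k * ln x)) with (INR k * L) in Hhead by (unfold L; ring).
    replace ((x ^ k / INR k + (x - x ^ k)) / L)
      with (x ^ k / (INR k * L) + (x - x ^ k) / L) by (field; lra).
    lra. }
  assert (x ^ k / INR k <= / INR k).
  { unfold Rdiv. rewrite <- (Rmult_1_l (/ INR k)) at 2.
    apply Rmult_le_compat_r; [left; apply Rinv_0_lt_compat|]; lra. }
  replace (li x * ln x) with ((- li x) * L) by (unfold L; ring).
  apply Rle_trans with ((x ^ k / INR k + (x - x ^ k)) / L * L).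
  - apply Rmult_le_compat_r; lra.
  - replace ((x ^ k / INR k + (x - x ^ k)) / L * L) with (x ^ k / INR k + (x - x ^ k))
      by (field; lra).
    lra.
Qed.

Lemma li_div_continuous : continuous_between (fun x => li x / x) 0 1.
Proof.
  intros x Hx. apply ex_derive_continuous_R. eexists.
  apply (is_derive_div li (fun t => t));
    [apply li_derive; lra | apply (is_derive_id (K := R_AbsRing)) | lra].
Qed.

Lemma is_RInt_open_li_div : is_RInt_open (fun x => li x / x) 0 1 (-1).
Proof.
  replace (-1) with (-1 - 0) by ring.
  apply (is_RInt_open_primitive (fun x => li x * ln x - x)); [lra| |apply li_div_continuous| |].
  - intros x Hx. pose proof (ln_lt_0 x Hx).
    replace (li x / x) with (inv_ln x * ln x + li x * / x - 1)
      by (unfold inv_ln; field; lra).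
    apply (is_derive_minus (fun t => li t * ln t) (fun t => t));
      [|apply (is_derive_id (K := R_AbsRing))].
    apply (is_derive_mult li ln); [apply li_derive; lra | auto_derive; [lra | field; lra] |].
    intros; apply Rmult_comm.
  - intros eps Heps. exists eps; split; auto. intros x Hx Hx1.
    pose proof (li_mul_ln_bounds x ltac:(lra)). apply Rabs_def1; lra.
  - intros eps Heps.
    destruct (archimed_cor1 (eps / 3)) as [k [Hk Hk1]]; [lra|].
    assert (Hk0 : 1 <= INR k) by (apply (le_INR 1); lia).
    exists (eps / (3 * INR k)). split; [apply Rdiv_lt_0_compat; lra|].
    intros x Hx Hx0.
    pose proof (li_mul_ln_bounds x ltac:(lra)).
    pose proof (li_mul_ln_le x k ltac:(lra) ltac:(lia)).
    assert (INR k * (1 - x) < eps / 3).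
    { replace (eps / 3) with (INR k * (eps / (3 * INR k))) by (field; lra).
      apply Rmult_lt_compat_l; lra. }
    assert (1 - x <= INR k * (1 - x)) by nra.
    apply Rabs_def1; lra.
Qed.

(** * The inner integrals over the vertical sections of T *)

Definition inner (n : nat) (x : R) : R :=
  ((- ln (x * (1 - x))) ^ (n + 1) - (- ln x) ^ (n + 1)) / (INR (n + 1) * x).

Definition inner_m1 (x : R) : R := (ln (- ln (x * (1 - x))) - ln (- ln x)) / x.

Lemma INR_succ_pos n : 0 < INR (n + 1).
Proof. apply lt_0_INR. lia. Qed.

Lemma section_bounds x y : 0 < x < 1 -> 1 - x <= y <= 1 -> 0 < x * y < 1.
Proof. intros. split; nra. Qed.

Lemma int_section_m1 x : 0 < x < 1 ->
  improper_int (fun y => / (x * y * (- ln (x * y)))) (1 - x) 1 (inner_m1 x).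
Proof.
  intros Hx. apply is_RInt_open_improper_int.
  set (F := fun y => - / x * ln (- ln (x * y))).
  replace (inner_m1 x) with (F 1 - F (1 - x))
    by (unfold F, inner_m1; rewrite Rmult_1_r; field; lra).
  apply is_RInt_open_primitive_closed; [lra| |];
    intros y Hy; destruct (section_bounds x y Hx Hy);
    assert (ln (x * y) < 0) by (apply ln_lt_0; lra).
  - unfold F. auto_derive; [repeat split; lra | field; repeat split; lra].
  - apply ex_derive_continuous_R. auto_derive. repeat split; try lra.
    assert (0 < x * y * - ln (x * y)) by (apply Rmult_lt_0_compat; lra). lra.
Qed.

Lemma int_section x n : 0 < x < 1 ->
  improper_int (fun y => (- ln (x * y)) ^ n / (x * y)) (1 - x) 1 (inner n x).
Proof.
  intros Hx. apply is_RInt_open_improper_int.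
  set (F := fun y => - / x * (- ln (x * y)) ^ (n + 1) / INR (n + 1)).
  pose proof (INR_succ_pos n).
  replace (inner n x) with (F 1 - F (1 - x))
    by (unfold F, inner; rewrite Rmult_1_r; field; lra).
  apply is_RInt_open_primitive_closed; [lra| |];
    intros y Hy; destruct (section_bounds x y Hx Hy).
  - unfold F. auto_derive; [repeat split; lra|].
    replace (Init.Nat.pred (n + 1)) with n by lia. field. repeat split; lra.
  - apply ex_derive_continuous_R. auto_derive. repeat split; lra.
Qed.

(** * Existence of I_n and the bound I_n <= 8 n! *)

Lemma fact_INR_pos n : 0 < INR (fact n).
Proof. apply lt_0_INR, lt_O_fact. Qed.

Lemma fact_INR_S n : INR (fact (S n)) = INR (S n) * INR (fact n).
Proof. apply mult_INR. Qed.

Fixpoint log_pow_primitive (n : nat) (u : R) : R :=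
  match n with
  | 0 => u
  | S m => u * (- ln u) ^ S m + INR (S m) * log_pow_primitive m u
  end.

Lemma log_pow_primitive_derive n u : 0 < u ->
  is_derive (log_pow_primitive n) u ((- ln u) ^ n).
Proof.
  intros Hu. induction n as [|m IH].
  - simpl. auto_derive; auto.
  - apply (is_derive_eq _ _ (((- ln u) ^ S m - INR (S m) * (- ln u) ^ m)
                            + INR (S m) * (- ln u) ^ m)); [|ring].
    apply (is_derive_plus (fun u => u * (- ln u) ^ S m)
             (fun u => INR (S m) * log_pow_primitive m u)).
    + auto_derive; auto.
      change (match m with 0%nat => 1 | S _ => INR m + 1 end) with (INR (S m)).
      simpl pow. field. lra.
    + apply is_derive_scal. auto.
Qed.

Lemma log_pow_primitive_exp_sum n u :
  log_pow_primitive n u = INR (fact n) * u * sum_f_R0 (fun k => (- ln u) ^ k / INR (fact k)) n.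
Proof.
  induction n as [|m IH].
  - simpl. field.
  - change (log_pow_primitive (S m) u)
      with (u * (- ln u) ^ S m + INR (S m) * log_pow_primitive m u).
    rewrite IH. change (sum_f_R0 ?f (S m)) with (sum_f_R0 f m + f (S m)). cbv beta.
    rewrite fact_INR_S. pose proof (fact_INR_pos m). pose proof (lt_0_INR (S m) ltac:(lia)).
    field. lra.
Qed.

(* The truncated exponential series of [- ln u] is at most [exp (- ln u) = / u]. *)
Lemma log_pow_primitive_bounds n u : 0 < u <= 1 ->
  0 <= log_pow_primitive n u <= INR (fact n).
Proof.
  intros Hu. rewrite log_pow_primitive_exp_sum.
  assert (Hl : 0 <= - ln u) by (assert (ln u <= 0) by (rewrite <- ln_1; apply ln_le; lra); lra).
  pose proof (fact_INR_pos n).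
  assert (0 <= sum_f_R0 (fun k => (- ln u) ^ k / INR (fact k)) n).
  { apply cond_pos_sum. intros k.
    apply Rdiv_le_0_compat; [apply pow_le; auto | apply fact_INR_pos]. }
  pose proof (exp_ge_taylor (- ln u) n Hl) as He.
  rewrite exp_Ropp, exp_ln in He by lra.
  split; [apply Rmult_le_pos; [apply Rmult_le_pos|]; lra|].
  apply Rle_trans with (INR (fact n) * u * / u).
  - apply Rmult_le_compat_l; [apply Rmult_le_pos|]; lra.
  - right; field; lra.
Qed.

Lemma pow_sub_le a b n : 0 <= a <= b -> b ^ S n - a ^ S n <= INR (S n) * (b - a) * b ^ n.
Proof.
  intros Hab. induction n as [|m IH]; [simpl; lra|].
  assert (0 <= a ^ S m <= b ^ S m) by (split; [apply pow_le | apply pow_incr]; lra).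
  replace (b ^ S (S m) - a ^ S (S m)) with (b * (b ^ S m - a ^ S m) + a ^ S m * (b - a))
    by (simpl; ring).
  rewrite (S_INR (S m)).
  apply Rle_trans with (b * (INR (S m) * (b - a) * b ^ m) + b ^ S m * (b - a)).
  - apply Rplus_le_compat; [apply Rmult_le_compat_l | apply Rmult_le_compat_r]; lra.
  - right. simpl. ring.
Qed.

Lemma ln_one_minus_le x : 0 < x < 1 -> - ln (1 - x) <= x / (1 - x).
Proof.
  intros Hx. rewrite <- ln_Rinv by lra.
  pose proof (exp_ineq1_le (ln (/ (1 - x)))) as H.
  rewrite exp_ln in H by (apply Rinv_0_lt_compat; lra).
  replace (x / (1 - x)) with (/ (1 - x) - 1) by (field; lra). lra.
Qed.

Lemma ln_le_ln2 x : 1 / 2 <= x < 1 -> - ln x <= ln 2.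
Proof.
  intros Hx. rewrite <- (Rinv_inv 2), ln_Rinv by lra.
  apply Ropp_le_contravar, ln_le; lra.
Qed.

Lemma inner_nonneg n x : 0 < x < 1 -> 0 <= inner n x.
Proof.
  intros Hx. unfold inner. pose proof (INR_succ_pos n).
  rewrite ln_mult by lra.
  pose proof (ln_lt_0 x Hx). pose proof (ln_lt_0 (1 - x) ltac:(lra)).
  apply Rdiv_le_0_compat; [|apply Rmult_lt_0_compat; lra].
  assert ((- ln x) ^ (n + 1) <= (- (ln x + ln (1 - x))) ^ (n + 1)) by (apply pow_incr; lra).
  lra.
Qed.

Lemma inner_le_left n x : 0 < x <= 1 / 2 -> inner n x <= 2 * (- ln (x / 2)) ^ n.
Proof.
  intros Hx. unfold inner. pose proof (INR_succ_pos n).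
  rewrite ln_mult, ln_div by lra.
  pose proof (ln_lt_0 x ltac:(lra)). pose proof (ln_lt_0 (1 - x) ltac:(lra)).
  set (a := - ln x). set (M := - ln (1 - x)).
  assert (0 < a) by (unfold a; lra). assert (0 < M) by (unfold M; lra).
  replace (- (ln x + ln (1 - x))) with (a + M) by (unfold a, M; ring).
  replace (- (ln x - ln 2)) with (a + ln 2) by (unfold a; ring).
  assert (HM : M <= 2 * x).
  { apply Rle_trans with (x / (1 - x)); [apply ln_one_minus_le; lra|].
    apply Rmult_le_reg_r with (1 - x); [lra|].
    replace (x / (1 - x) * (1 - x)) with x by (field; lra). nra. }
  assert (HM2 : M <= ln 2) by (apply ln_le_ln2; lra).
  replace (n + 1)%nat with (S n) by lia.
  pose proof (pow_sub_le a (a + M) n ltac:(lra)).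
  apply Rmult_le_reg_r with (INR (S n) * x);
    [apply Rmult_lt_0_compat; [apply lt_0_INR; lia | lra]|].
  replace (((a + M) ^ S n - a ^ S n) / (INR (S n) * x) * (INR (S n) * x))
    with ((a + M) ^ S n - a ^ S n) by (field; split; [lra | apply not_0_INR; lia]).
  apply Rle_trans with (INR (S n) * M * (a + M) ^ n); [lra|].
  replace (2 * (a + ln 2) ^ n * (INR (S n) * x)) with (INR (S n) * (2 * x) * (a + ln 2) ^ n)
    by ring.
  pose proof (pos_INR (S n)).
  apply Rmult_le_compat; [apply Rmult_le_pos; lra | apply pow_le; lra | |].
  - apply Rmult_le_compat_l; lra.
  - apply pow_incr. lra.
Qed.

Lemma inner_le_right n x : 1 / 2 <= x < 1 ->
  inner n x <= 2 * (- ln ((1 - x) / 2)) ^ (n + 1) / INR (n + 1).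
Proof.
  intros Hx. unfold inner. pose proof (INR_succ_pos n).
  rewrite ln_mult, ln_div by lra.
  pose proof (ln_lt_0 x ltac:(lra)). pose proof (ln_lt_0 (1 - x) ltac:(lra)).
  set (a := - ln x). set (M := - ln (1 - x)).
  assert (0 < a) by (unfold a; lra). assert (0 < M) by (unfold M; lra).
  replace (- (ln x + ln (1 - x))) with (a + M) by (unfold a, M; ring).
  replace (- (ln (1 - x) - ln 2)) with (M + ln 2) by (unfold M; ring).
  assert (Ha2 : a <= ln 2) by (apply ln_le_ln2; lra).
  assert (0 <= a ^ (n + 1)) by (apply pow_le; lra).
  assert ((a + M) ^ (n + 1) <= (M + ln 2) ^ (n + 1)) by (apply pow_incr; lra).
  apply Rmult_le_reg_r with (INR (n + 1) * x); [apply Rmult_lt_0_compat; lra|].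
  replace (((a + M) ^ (n + 1) - a ^ (n + 1)) / (INR (n + 1) * x) * (INR (n + 1) * x))
    with ((a + M) ^ (n + 1) - a ^ (n + 1)) by (field; lra).
  replace (2 * (M + ln 2) ^ (n + 1) / INR (n + 1) * (INR (n + 1) * x))
    with (2 * x * (M + ln 2) ^ (n + 1)) by (field; lra).
  assert (0 <= (a + M) ^ (n + 1)) by (apply pow_le; lra).
  nra.
Qed.

(* Below [1/2] the factor [1/x] is absorbed by [- ln (1 - x) <= 2 x], above it
   by [x >= 1/2]; each term then integrates to at most [4 n!]. *)
Definition inner_majorant (n : nat) (x : R) : R :=
  2 * (- ln (x / 2)) ^ n + 2 * (- ln ((1 - x) / 2)) ^ (n + 1) / INR (n + 1).

Lemma inner_le_majorant n x : 0 < x < 1 -> inner n x <= inner_majorant n x.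
Proof.
  intros Hx. unfold inner_majorant. pose proof (INR_succ_pos n).
  assert (0 <= 2 * (- ln (x / 2)) ^ n).
  { apply Rmult_le_pos; [lra | apply pow_le].
    pose proof (ln_lt_0 (x / 2) ltac:(lra)). lra. }
  assert (0 <= 2 * (- ln ((1 - x) / 2)) ^ (n + 1) / INR (n + 1)).
  { apply Rdiv_le_0_compat; [apply Rmult_le_pos; [lra | apply pow_le] | lra].
    pose proof (ln_lt_0 ((1 - x) / 2) ltac:(lra)). lra. }
  destruct (Rle_or_lt x (1 / 2)).
  - pose proof (inner_le_left n x ltac:(lra)). lra.
  - pose proof (inner_le_right n x ltac:(lra)). lra.
Qed.

Definition inner_majorant_primitive (n : nat) (x : R) : R :=
  4 * log_pow_primitive n (x / 2)
  + - (4 / INR (n + 1)) * log_pow_primitive (n + 1) ((1 - x) / 2).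

Lemma inner_majorant_primitive_derive n x : 0 < x < 1 ->
  is_derive (inner_majorant_primitive n) x (inner_majorant n x).
Proof.
  intros Hx. unfold inner_majorant_primitive, inner_majorant. pose proof (INR_succ_pos n).
  apply (is_derive_eq _ _ (4 * (/ 2 * (- ln (x / 2)) ^ n)
           + - (4 / INR (n + 1)) * (- / 2 * (- ln ((1 - x) / 2)) ^ (n + 1))));
    [|field; lra].
  apply (is_derive_plus (fun t => 4 * log_pow_primitive n (t / 2))
           (fun t => - (4 / INR (n + 1)) * log_pow_primitive (n + 1) ((1 - t) / 2)));
    apply is_derive_scal.
  - apply (is_derive_comp (log_pow_primitive n) (fun t => t / 2));
      [apply log_pow_primitive_derive; lra | auto_derive; auto; field].
  - apply (is_derive_comp (log_pow_primitive (n + 1)) (fun t => (1 - t) / 2));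
      [apply log_pow_primitive_derive; lra | auto_derive; auto; field].
Qed.

Lemma inner_majorant_primitive_incr_le n c d : 0 < c -> c <= d -> d < 1 ->
  inner_majorant_primitive n d - inner_majorant_primitive n c <= 8 * INR (fact n).
Proof.
  intros Hc Hcd Hd. unfold inner_majorant_primitive. pose proof (INR_succ_pos n).
  destruct (log_pow_primitive_bounds n (d / 2)); [lra|].
  destruct (log_pow_primitive_bounds n (c / 2)); [lra|].
  destruct (log_pow_primitive_bounds (n + 1) ((1 - d) / 2)); [lra|].
  destruct (log_pow_primitive_bounds (n + 1) ((1 - c) / 2)); [lra|].
  set (k := 4 / INR (n + 1)).
  assert (Hk : 0 < k) by (unfold k; apply Rdiv_lt_0_compat; lra).
  assert (Hkf : k * INR (fact (n + 1)) = 4 * INR (fact n)).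
  { unfold k. replace (n + 1)%nat with (S n) by lia. rewrite fact_INR_S.
    field. apply not_0_INR; lia. }
  assert (0 <= k * log_pow_primitive (n + 1) ((1 - d) / 2)) by (apply Rmult_le_pos; lra).
  assert (k * log_pow_primitive (n + 1) ((1 - c) / 2) <= k * INR (fact (n + 1)))
    by (apply Rmult_le_compat_l; lra).
  lra.
Qed.

Lemma inner_continuous n : continuous_between (inner n) 0 1.
Proof.
  intros x Hx. apply ex_derive_continuous_R. unfold inner. pose proof (INR_succ_pos n).
  assert (0 < x * (1 - x)) by nra.
  auto_derive. repeat split; try lra. apply Rmult_integral_contrapositive; split; lra.
Qed.

Lemma inner_majorant_continuous n : continuous_between (inner_majorant n) 0 1.
Proof.
  intros x Hx. apply ex_derive_continuous_R. unfold inner_majorant.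
  pose proof (INR_succ_pos n). auto_derive. repeat split; lra.
Qed.

Lemma RInt_inner_le n c d : 0 < c -> c <= d -> d < 1 -> RInt (inner n) c d <= 8 * INR (fact n).
Proof.
  intros Hc Hcd Hd.
  apply Rle_trans with (RInt (inner_majorant n) c d).
  - apply RInt_le; [exact Hcd | | |].
    + exact (ex_RInt_between _ 0 1 c d (inner_continuous n) Hc Hcd Hd).
    + exact (ex_RInt_between _ 0 1 c d (inner_majorant_continuous n) Hc Hcd Hd).
    + intros x Hx; apply inner_le_majorant; lra.
  - rewrite (RInt_primitive (inner_majorant_primitive n) _ c d Hcd).
    + apply inner_majorant_primitive_incr_le; auto.
    + intros; apply inner_majorant_primitive_derive; lra.
    + intros; apply inner_majorant_continuous; lra.
Qed.

Lemma is_RInt_open_inner_le n :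
  exists l, is_RInt_open (inner n) 0 1 l /\ l <= 8 * INR (fact n).
Proof.
  destruct (ex_RInt_open_bounded (inner n) 0 1 (8 * INR (fact n))) as [l Hl].
  - lra.
  - apply inner_continuous.
  - intros; apply inner_nonneg; auto.
  - intros; apply RInt_inner_le; auto.
  - exists l; split; auto. apply (is_RInt_open_ub (inner n) 0 1); auto; [lra|].
    intros; apply RInt_inner_le; auto.
Qed.

(** * Taylor expansion of the kernel (1 - exp (- t)) / t *)

Lemma derive_nonneg_le (F f : R -> R) (a b : R) : a <= b ->
  (forall t, a <= t <= b -> is_derive F t (f t)) ->
  (forall t, a <= t <= b -> 0 <= f t) -> F a <= F b.
Proof.
  intros Hab HD Hf.
  destruct (MVT_gen F a b f) as [c [Hc Ec]]; rewrite Rmin_left, Rmax_right in * by lra.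
  - intros; apply HD; lra.
  - intros x Hx. apply continuity_pt_filterlim, ex_derive_continuous_R.
    eexists; apply HD; auto.
  - pose proof (Hf c Hc). assert (0 <= f c * (b - a)) by (apply Rmult_le_pos; lra). lra.
Qed.

Lemma derive_abs_le (D E d e : R -> R) (a b : R) : a <= b ->
  (forall t, a <= t <= b -> is_derive D t (d t)) ->
  (forall t, a <= t <= b -> is_derive E t (e t)) ->
  (forall t, a <= t <= b -> Rabs (d t) <= e t) ->
  Rabs (D b - D a) <= E b - E a.
Proof.
  intros Hab HD HE Hde.
  assert (Hm : E a - D a <= E b - D b).
  { apply (derive_nonneg_le (fun t => E t - D t) (fun t => e t - d t)); auto.
    - intros t Ht. apply (is_derive_minus E D); auto.
    - intros t Ht. pose proof (Hde t Ht). apply Rabs_le_between in H. lra. }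
  assert (Hp : E a + D a <= E b + D b).
  { apply (derive_nonneg_le (fun t => E t + D t) (fun t => e t + d t)); auto.
    - intros t Ht. apply (is_derive_plus E D); auto.
    - intros t Ht. pose proof (Hde t Ht). apply Rabs_le_between in H. lra. }
  apply Rabs_le. lra.
Qed.

Lemma is_derive_pow_div n c s : c <> 0 ->
  is_derive (fun s => s ^ S n / c) s (INR (S n) * s ^ n / c).
Proof.
  intros Hc. auto_derive; auto. simpl pred.
  change (match n with 0%nat => 1 | S _ => INR n + 1 end) with (INR (S n)). field; auto.
Qed.

Lemma is_derive_pow_div_fact n s :
  is_derive (fun s => s ^ S n / INR (fact (S n))) s (s ^ n / INR (fact n)).
Proof.
  apply (is_derive_eq _ _ _ _ (is_derive_pow_div n _ s (INR_fact_neq_0 (S n)))).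
  rewrite fact_INR_S. field. split; [apply INR_fact_neq_0 | apply not_0_INR; lia].
Qed.

Lemma neg_pow t k : (- t) ^ k = (-1) ^ k * t ^ k.
Proof. induction k as [|k IH]; simpl; [ring | rewrite IH; ring]. Qed.

Definition exp_neg_taylor (K : nat) (t : R) : R :=
  sum_f_R0 (fun m => (- t) ^ m / INR (fact m)) K.

Lemma exp_neg_taylor_0 K : exp_neg_taylor K 0 = 1.
Proof.
  induction K as [|K IH]; [unfold exp_neg_taylor; simpl; field|].
  unfold exp_neg_taylor in *. rewrite tech5, IH, Ropp_0, pow_i by lia.
  unfold Rdiv; ring.
Qed.

Lemma exp_neg_taylor_derive K s :
  is_derive (exp_neg_taylor (S K)) s (- exp_neg_taylor K s).
Proof.
  induction K as [|K IH].
  - unfold exp_neg_taylor; simpl. auto_derive; auto. field.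
  - assert (Hterm : is_derive (fun t => (- t) ^ S (S K) / INR (fact (S (S K)))) s
                      (- ((- s) ^ S K / INR (fact (S K))))).
    { apply (is_derive_eq _ _ (scal (-1) ((- s) ^ S K / INR (fact (S K)))));
        [|unfold scal; simpl; unfold mult; simpl; ring].
      apply (is_derive_comp (fun u => u ^ S (S K) / INR (fact (S (S K)))) Ropp).
      - apply is_derive_pow_div_fact.
      - auto_derive; auto. }
    apply (is_derive_eq _ _ (- exp_neg_taylor K s + - ((- s) ^ S K / INR (fact (S K)))));
      [|unfold exp_neg_taylor; rewrite (tech5 _ K); ring].
    apply (is_derive_plus (exp_neg_taylor (S K))
             (fun t => (- t) ^ S (S K) / INR (fact (S (S K))))); auto.
Qed.

(* Each remainder is the integral of the previous one, so the bounds follow by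
   comparing derivatives from [0]. *)
Lemma exp_neg_taylor_remainder K t : 0 <= t ->
  Rabs (exp (- t) - exp_neg_taylor K t) <= t ^ S K / INR (fact (S K)).
Proof.
  revert t. induction K as [|K IH]; intros t Ht.
  - assert (B := derive_abs_le (fun s => exp (- s) - exp_neg_taylor 0 s)
             (fun s => s ^ 1 / INR (fact 1)) (fun s => - exp (- s))
             (fun s => s ^ 0 / INR (fact 0)) 0 t Ht).
    cbv beta in B. rewrite exp_neg_taylor_0, Ropp_0, exp_0, pow_i in B by lia.
    replace (exp (- t) - exp_neg_taylor 0 t) with (exp (- t) - exp_neg_taylor 0 t - (1 - 1))
      by ring.
    replace (t ^ 1 / INR (fact 1)) with (t ^ 1 / INR (fact 1) - 0 / INR (fact 1))
      by (unfold Rdiv; ring).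
    apply B.
    + intros s Hs. unfold exp_neg_taylor; simpl. auto_derive; auto. ring.
    + intros s Hs. apply is_derive_pow_div_fact.
    + intros s Hs. rewrite Rabs_Ropp, Rabs_right by (left; apply exp_pos).
      replace (s ^ 0 / INR (fact 0)) with (exp 0) by (rewrite exp_0; simpl; field).
      destruct (Req_dec s 0) as [->|]; [rewrite Ropp_0; lra|].
      left; apply exp_increasing; lra.
  - assert (B := derive_abs_le (fun s => exp (- s) - exp_neg_taylor (S K) s)
             (fun s => s ^ S (S K) / INR (fact (S (S K))))
             (fun s => - (exp (- s) - exp_neg_taylor K s))
             (fun s => s ^ S K / INR (fact (S K))) 0 t Ht).
    cbv beta in B. rewrite exp_neg_taylor_0, Ropp_0, exp_0, pow_i in B by lia.
    replace (exp (- t) - exp_neg_taylor (S K) t)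
      with (exp (- t) - exp_neg_taylor (S K) t - (1 - 1)) by ring.
    replace (t ^ S (S K) / INR (fact (S (S K))))
      with (t ^ S (S K) / INR (fact (S (S K))) - 0 / INR (fact (S (S K))))
      by (unfold Rdiv; ring).
    apply B.
    + intros s Hs.
      apply (is_derive_eq _ _ (- exp (- s) - - exp_neg_taylor K s)); [|ring].
      apply (is_derive_minus (fun s => exp (- s)) (exp_neg_taylor (S K))).
      * auto_derive; auto. ring.
      * apply exp_neg_taylor_derive.
    + intros s Hs. apply is_derive_pow_div_fact.
    + intros s Hs. rewrite Rabs_Ropp. apply IH. lra.
Qed.

Definition phi (t : R) : R := (1 - exp (- t)) / t.

Definition Phi (t : R) : R := ln t - li (exp (- t)).

Definition phi_partial (N : nat) (t : R) : R :=
  sum_f_R0 (fun n => (-1) ^ n * t ^ n / INR (fact (n + 1))) N.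

Definition Phi_partial (N : nat) (t : R) : R :=
  sum_f_R0 (fun n => (-1) ^ n * t ^ (n + 1) / (INR (n + 1) * INR (fact (n + 1)))) N.

Lemma exp_neg_lt_1 t : 0 < t -> 0 < exp (- t) < 1.
Proof. intros. split; [apply exp_pos | rewrite <- exp_0; apply exp_increasing; lra]. Qed.

Lemma Phi_derive t : 0 < t -> is_derive Phi t (phi t).
Proof.
  intros Ht. unfold Phi, phi. destruct (exp_neg_lt_1 t Ht).
  assert (Dli : is_derive (fun t => li (exp (- t))) t (- exp (- t) * inv_ln (exp (- t)))).
  { apply (is_derive_comp li (fun t => exp (- t))); [apply li_derive; lra|].
    auto_derive; auto. ring. }
  unfold inv_ln in Dli. rewrite ln_exp in Dli.
  apply (is_derive_eq _ _ (/ t - - exp (- t) * / - t)); [|field; lra].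
  apply (is_derive_minus ln (fun t => li (exp (- t)))); auto.
  auto_derive; auto. ring.
Qed.

Lemma phi_bounds t : 0 < t -> 0 <= phi t <= 1.
Proof.
  intros Ht. unfold phi. destruct (exp_neg_lt_1 t Ht). pose proof (exp_ineq1_le (- t)).
  split; [apply Rdiv_le_0_compat; lra|].
  apply Rmult_le_reg_r with t; auto.
  replace ((1 - exp (- t)) / t * t) with (1 - exp (- t)) by (field; lra). lra.
Qed.

Lemma mul_phi_partial N t : t * phi_partial N t = 1 - exp_neg_taylor (S N) t.
Proof.
  induction N as [|N IH].
  - unfold phi_partial, exp_neg_taylor. simpl. field.
  - unfold phi_partial, exp_neg_taylor in *.
    rewrite (tech5 _ N), (tech5 _ (S N)), Rmult_plus_distr_l, IH, neg_pow.
    replace (S N + 1)%nat with (S (S N)) by lia.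
    pose proof (fact_INR_pos (S (S N))). simpl pow. field. lra.
Qed.

Lemma phi_partial_remainder N t : 0 < t ->
  Rabs (phi t - phi_partial N t) <= t ^ (N + 1) / INR (fact (N + 2)).
Proof.
  intros Ht.
  replace (phi t - phi_partial N t) with ((exp_neg_taylor (S N) t - exp (- t)) / t)
    by (unfold phi; replace (exp_neg_taylor (S N) t) with (1 - t * phi_partial N t)
          by (rewrite mul_phi_partial; ring); field; lra).
  unfold Rdiv at 1. rewrite Rabs_mult, Rabs_inv, (Rabs_right t), <- Rabs_Ropp by lra.
  replace (- (exp_neg_taylor (S N) t - exp (- t))) with (exp (- t) - exp_neg_taylor (S N) t)
    by ring.
  pose proof (exp_neg_taylor_remainder (S N) t ltac:(lra)) as B.
  replace (S (S N)) with (N + 2)%nat in B by lia.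
  apply Rmult_le_reg_r with t; auto.
  rewrite Rmult_assoc, Rinv_l, Rmult_1_r by lra.
  replace (t ^ (N + 1) / INR (fact (N + 2)) * t) with (t ^ (N + 2) / INR (fact (N + 2))); auto.
  replace (N + 2)%nat with (S (N + 1)) at 1 by lia. simpl. field. apply INR_fact_neq_0.
Qed.

Lemma Phi_partial_derive N t : is_derive (Phi_partial N) t (phi_partial N t).
Proof.
  assert (Hterm : forall n, is_derive
            (fun t => (-1) ^ n * t ^ (n + 1) / (INR (n + 1) * INR (fact (n + 1)))) t
            ((-1) ^ n * t ^ n / INR (fact (n + 1)))).
  { intros n. pose proof (fact_INR_pos (n + 1)). pose proof (INR_succ_pos n).
    replace (n + 1)%nat with (S n) in * by lia.
    auto_derive; [auto|].
    change (match n with 0%nat => 1 | S _ => INR n + 1 end) with (INR (S n)).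
    simpl pred. change (fact n + n * fact n)%nat with (fact (S n)). field. lra. }
  induction N as [|N IH]; [apply Hterm|].
  apply (is_derive_plus (Phi_partial N)); auto.
Qed.

(** * The series integrand *)

Definition series_integrand (x : R) : R := inner_m1 x - (li (x * (1 - x)) - li x) / x.

Definition series_integrand_partial (N : nat) (x : R) : R :=
  sum_f_R0 (fun n => (-1) ^ n * inner n x / INR (fact (n + 1))) N.

Lemma neg_ln_section x : 0 < x < 1 -> 0 < - ln x <= - ln (x * (1 - x)).
Proof.
  intros Hx. pose proof (ln_lt_0 x Hx). split; [lra|].
  apply Ropp_le_contravar, ln_le; nra.
Qed.

Lemma series_integrand_Phi x : 0 < x < 1 ->
  series_integrand x = (Phi (- ln (x * (1 - x))) - Phi (- ln x)) / x.
Proof.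
  intros Hx. unfold series_integrand, Phi, inner_m1.
  rewrite !Ropp_involutive, !exp_ln by nra. field. lra.
Qed.

Lemma series_integrand_partial_Phi_partial N x : 0 < x < 1 ->
  series_integrand_partial N x
  = (Phi_partial N (- ln (x * (1 - x))) - Phi_partial N (- ln x)) / x.
Proof.
  intros Hx. unfold series_integrand_partial, Phi_partial.
  induction N as [|N IH].
  - change (sum_f_R0 ?f 0) with (f 0%nat). cbv beta. unfold inner.
    pose proof (fact_INR_pos (0 + 1)). pose proof (INR_succ_pos 0). field. lra.
  - rewrite !tech5, IH. unfold inner.
    pose proof (fact_INR_pos (S N + 1)). pose proof (INR_succ_pos (S N)).
    field. lra.
Qed.

Lemma series_integrand_bounds x : 0 < x < 1 -> 0 <= series_integrand x <= inner 0 x.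
Proof.
  intros Hx. rewrite series_integrand_Phi by auto.
  destruct (neg_ln_section x Hx) as [H1 H2].
  replace (inner 0 x) with ((- ln (x * (1 - x)) - - ln x) / x) by (unfold inner; simpl; field; lra).
  assert (Habs := derive_abs_le Phi (fun t => t) phi (fun _ => 1) _ _ H2).
  assert (Hmono := derive_nonneg_le Phi phi _ _ H2).
  split.
  - apply Rdiv_le_0_compat; [|lra].
    cut (Phi (- ln x) <= Phi (- ln (x * (1 - x)))); [lra|].
    apply Hmono; intros t Ht; [apply Phi_derive | apply phi_bounds]; lra.
  - apply Rmult_le_compat_r; [left; apply Rinv_0_lt_compat; lra|].
    cut (Rabs (Phi (- ln (x * (1 - x))) - Phi (- ln x)) <= - ln (x * (1 - x)) - - ln x);
      [intros H; apply Rabs_le_between in H; lra|].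
    apply Habs; intros t Ht.
    + apply Phi_derive; lra.
    + apply (is_derive_id (K := R_AbsRing)).
    + destruct (phi_bounds t ltac:(lra)). rewrite Rabs_right; lra.
Qed.

Lemma series_integrand_remainder N x : 0 < x < 1 ->
  Rabs (series_integrand x - series_integrand_partial N x)
  <= inner (N + 1) x / INR (fact (N + 2)).
Proof.
  intros Hx. rewrite series_integrand_Phi, series_integrand_partial_Phi_partial by auto.
  destruct (neg_ln_section x Hx) as [H1 H2].
  set (L1 := - ln x) in *. set (L2 := - ln (x * (1 - x))) in *.
  pose proof (fact_INR_pos (N + 2)). assert (0 < INR (N + 2)) by (apply lt_0_INR; lia).
  set (c := INR (N + 2) * INR (fact (N + 2))).
  assert (Hc : 0 < c) by (unfold c; nra).
  replace (inner (N + 1) x / INR (fact (N + 2)))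
    with ((L2 ^ S (N + 1) / c - L1 ^ S (N + 1) / c) / x).
  2: { unfold inner, c. fold L1 L2. replace (N + 1 + 1)%nat with (S (N + 1)) by lia.
       replace (S (N + 1)) with (N + 2)%nat by lia. field. lra. }
  replace ((Phi L2 - Phi L1) / x - (Phi_partial N L2 - Phi_partial N L1) / x)
    with ((Phi L2 - Phi_partial N L2 - (Phi L1 - Phi_partial N L1)) / x) by (field; lra).
  unfold Rdiv at 1. rewrite Rabs_mult, (Rabs_right (/ x)) by (left; apply Rinv_0_lt_compat; lra).
  apply Rmult_le_compat_r; [left; apply Rinv_0_lt_compat; lra|].
  apply (derive_abs_le (fun t => Phi t - Phi_partial N t) (fun t => t ^ S (N + 1) / c)
           (fun t => phi t - phi_partial N t)
           (fun t => t ^ (N + 1) / INR (fact (N + 2)))); auto; intros t Ht.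
  - apply (is_derive_minus Phi (Phi_partial N)); [apply Phi_derive; lra | apply Phi_partial_derive].
  - apply (is_derive_eq _ _ _ _ (is_derive_pow_div (N + 1) c t ltac:(lra))).
    unfold c. replace (S (N + 1)) with (N + 2)%nat by lia. field. lra.
  - apply phi_partial_remainder. lra.
Qed.

Lemma inner_m1_continuous : continuous_between inner_m1 0 1.
Proof.
  intros x Hx. apply ex_derive_continuous_R. unfold inner_m1.
  assert (0 < x * (1 - x) < 1) by (split; nra).
  pose proof (ln_lt_0 x Hx). pose proof (ln_lt_0 (x * (1 - x)) H).
  auto_derive. replace (1 + - x) with (1 - x) by ring. intuition lra.
Qed.

Lemma li_section_div_continuous : continuous_between (fun x => li (x * (1 - x)) / x) 0 1.
Proof.
  intros x Hx. apply ex_derive_continuous_R.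
  assert (0 < x * (1 - x) < 1) by (split; nra).
  eexists. apply (is_derive_div (fun t => li (t * (1 - t))) (fun t => t)); [| |lra].
  - apply (is_derive_comp li (fun t => t * (1 - t))); [apply li_derive; lra|].
    auto_derive; auto.
  - apply (is_derive_id (K := R_AbsRing)).
Qed.

Lemma series_integrand_continuous : continuous_between series_integrand 0 1.
Proof.
  intros x Hx.
  apply (continuous_ext_loc _ (fun x => inner_m1 x + - (li (x * (1 - x)) / x) + li x / x)).
  - exists (mkposreal (Rmin x (1 - x)) ltac:(apply Rmin_pos; lra)). intros y Hy.
    unfold ball in Hy; simpl in Hy; unfold AbsRing_ball, abs, minus, plus, opp in Hy; simpl in Hy.
    apply Rabs_def2 in Hy. pose proof (Rmin_l x (1 - x)). pose proof (Rmin_r x (1 - x)).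
    assert (E : inner_m1 y + - (li (y * (1 - y)) / y) + li y / y = series_integrand y)
      by (unfold series_integrand; field; lra).
    exact E.
  - apply (continuous_plus (fun x => inner_m1 x + - (li (x * (1 - x)) / x)) (fun x => li x / x));
      [apply (continuous_plus inner_m1) | apply li_div_continuous; auto].
    + apply inner_m1_continuous; auto.
    + apply (continuous_opp (fun x => li (x * (1 - x)) / x)), li_section_div_continuous; auto.
Qed.

(* [li u] lies between [- u / (- ln u)] and [0], and [- ln u > 1] for [u <= 1/4]. *)
Lemma li_section_div_bounds x : 0 < x < 1 -> 0 <= - (li (x * (1 - x)) / x) <= 1.
Proof.
  intros Hx.
  assert (Hu : 0 < x * (1 - x) <= / 4)
    by (split; [nra | pose proof (Rle_0_sqr (2 * x - 1)); unfold Rsqr in *; lra]).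
  destruct (li_bounds (x * (1 - x)) ltac:(lra)) as [Hlo Hhi].
  assert (Hl : 1 < - ln (x * (1 - x))).
  { assert (ln (x * (1 - x)) <= ln (/ 4)) by (apply ln_le; lra).
    rewrite ln_Rinv in H by lra.
    assert (1 < ln 4); [|lra].
    rewrite <- ln_exp at 1. apply ln_increasing; [apply exp_pos|].
    pose proof exp_le_3. lra. }
  assert (x * (1 - x) / - ln (x * (1 - x)) <= x * (1 - x)).
  { apply Rmult_le_reg_r with (- ln (x * (1 - x))); [lra|].
    replace (x * (1 - x) / - ln (x * (1 - x)) * - ln (x * (1 - x))) with (x * (1 - x))
      by (field; lra).
    nra. }
  replace (- (li (x * (1 - x)) / x)) with (- li (x * (1 - x)) / x) by (field; lra).
  split; [apply Rdiv_le_0_compat; lra|].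
  apply Rmult_le_reg_r with x; [lra|].
  replace (- li (x * (1 - x)) / x * x) with (- li (x * (1 - x))) by (field; lra). nra.
Qed.

Lemma is_RInt_open_li_section_div :
  exists J, is_RInt_open (fun x => li (x * (1 - x)) / x) 0 1 J.
Proof.
  assert (Hc : continuous_between (fun x => - (li (x * (1 - x)) / x)) 0 1)
    by (intros x Hx; apply (continuous_opp (fun x => li (x * (1 - x)) / x)),
          li_section_div_continuous; auto).
  destruct (ex_RInt_open_bounded (fun x => - (li (x * (1 - x)) / x)) 0 1 1) as [l Hl];
    [lra | auto | intros; apply li_section_div_bounds; auto | |].
  - intros c d Hc0 Hcd Hd.
    apply Rle_trans with (RInt (fun _ => 1) c d).
    + apply RInt_le; [auto | apply (ex_RInt_between _ 0 1); auto | apply ex_RInt_const |].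
      intros; apply li_section_div_bounds; lra.
    + rewrite RInt_const. unfold scal; simpl; unfold mult; simpl. lra.
  - exists (-1 * l).
    apply (is_RInt_open_ext (fun x => -1 * - (li (x * (1 - x)) / x))); [intros; ring|].
    apply is_RInt_open_scal; auto.
Qed.

Lemma is_RInt_open_series_integrand : exists l, is_RInt_open series_integrand 0 1 l.
Proof.
  apply (ex_RInt_open_bounded series_integrand 0 1 8);
    [lra | apply series_integrand_continuous | intros; apply series_integrand_bounds; auto|].
  intros c d Hc Hcd Hd. apply Rle_trans with (RInt (inner 0) c d).
  - apply RInt_le; [auto | | |].
    + exact (ex_RInt_between _ 0 1 c d series_integrand_continuous Hc Hcd Hd).
    + exact (ex_RInt_between _ 0 1 c d (inner_continuous 0) Hc Hcd Hd).
    + intros; apply series_integrand_bounds; lra.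
  - pose proof (RInt_inner_le 0 c d Hc Hcd Hd). simpl in H. lra.
Qed.

(** * Summing the series *)

Definition I_val (n : nat) : R :=
  proj1_sig (constructive_indefinite_description _ (is_RInt_open_inner_le n)).

Lemma I_val_spec n : is_RInt_open (inner n) 0 1 (I_val n) /\ I_val n <= 8 * INR (fact n).
Proof. unfold I_val. destruct (constructive_indefinite_description _ _) as [l Hl]. exact Hl. Qed.

Definition series_partial (N : nat) : R :=
  sum_f_R0 (fun n => (-1) ^ n * I_val n / INR (fact (n + 1))) N.

Lemma is_RInt_open_series_integrand_partial N :
  is_RInt_open (series_integrand_partial N) 0 1 (series_partial N).
Proof.
  assert (Hterm : forall n, is_RInt_open (fun x => (-1) ^ n * inner n x / INR (fact (n + 1))) 0 1
                             ((-1) ^ n * I_val n / INR (fact (n + 1)))).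
  { intros n.
    apply (is_RInt_open_ext (fun x => ((-1) ^ n / INR (fact (n + 1))) * inner n x));
      [intros; unfold Rdiv; ring|].
    replace ((-1) ^ n * I_val n / INR (fact (n + 1)))
      with (((-1) ^ n / INR (fact (n + 1))) * I_val n) by (unfold Rdiv; ring).
    apply is_RInt_open_scal, I_val_spec. }
  induction N as [|N IH]; [apply Hterm|].
  apply (is_RInt_open_plus (series_integrand_partial N)); auto.
Qed.

(* Integrating the pointwise remainder bound gives [I_(N+1) / (N+2)! <= 8 / (N+2)]. *)
Lemma series_partial_dist N l : is_RInt_open series_integrand 0 1 l ->
  Rabs (series_partial N - l) <= 8 / INR (N + 2).
Proof.
  intros Hl.
  assert (Hdiff := is_RInt_open_plus _ _ _ _ _ _ (is_RInt_open_series_integrand_partial N)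
                     (is_RInt_open_scal (-1) _ _ _ _ Hl)).
  destruct (I_val_spec (N + 1)) as [HI HIle].
  pose proof (fact_INR_pos (N + 2)) as Hf.
  set (k := / INR (fact (N + 2))).
  assert (Hk : 0 < k) by (apply Rinv_0_lt_compat; auto).
  assert (Hpt : forall x, 0 < x < 1 ->
            - k * inner (N + 1) x <= series_integrand_partial N x + -1 * series_integrand x
            <= k * inner (N + 1) x).
  { intros x Hx. pose proof (series_integrand_remainder N x Hx) as B.
    rewrite <- Rabs_Ropp in B. apply Rabs_le_between in B. unfold k, Rdiv in *. lra. }
  assert (Hup := is_RInt_open_le _ _ 0 1 _ _ ltac:(lra) Hdiff (is_RInt_open_scal k _ _ _ _ HI)
                   ltac:(intros; apply Hpt; auto)).
  assert (Hlo := is_RInt_open_le _ _ 0 1 _ _ ltac:(lra) (is_RInt_open_scal (- k) _ _ _ _ HI) Hdiff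
                   ltac:(intros; apply Hpt; auto)).
  assert (k * I_val (N + 1) <= 8 / INR (N + 2)).
  { pose proof (fact_INR_pos (N + 1)).
    replace (8 / INR (N + 2)) with (k * (8 * INR (fact (N + 1)))).
    - apply Rmult_le_compat_l; lra.
    - unfold k. replace (N + 2)%nat with (S (N + 1)) by lia.
      rewrite fact_INR_S. field. split; [apply not_0_INR; lia | apply INR_fact_neq_0]. }
  apply Rabs_le. lra.
Qed.

Lemma infinite_sum_series l : is_RInt_open series_integrand 0 1 l ->
  infinite_sum (fun n => (-1) ^ n * I_val n / INR (fact (n + 1))) l.
Proof.
  intros Hl eps Heps.
  destruct (archimed_cor1 (eps / 8)) as [m [Hm Hm0]]; [lra|].
  exists m. intros n Hn. unfold Rdist. fold (series_partial n).
  apply Rle_lt_trans with (8 / INR (n + 2)); [apply series_partial_dist; auto|].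
  assert (INR m <= INR (n + 2)) by (apply le_INR; lia).
  assert (0 < INR m) by (apply lt_0_INR; lia).
  apply Rle_lt_trans with (8 / INR m).
  - unfold Rdiv. apply Rmult_le_compat_l; [lra|]. apply Rinv_le_contravar; lra.
  - replace eps with (8 * (eps / 8)) by field. unfold Rdiv. apply Rmult_lt_compat_l; lra.
Qed.

Lemma is_RInt_open_inner_m1 l J : is_RInt_open series_integrand 0 1 l ->
  is_RInt_open (fun x => li (x * (1 - x)) / x) 0 1 J ->
  is_RInt_open inner_m1 0 1 (l + J + 1).
Proof.
  intros Hl HJ. replace (l + J + 1) with (l + J + -1 * -1) by ring.
  apply (is_RInt_open_ext (fun x => series_integrand x + li (x * (1 - x)) / x + -1 * (li x / x)));
    [intros x Hx; unfold series_integrand; field; lra|].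
  apply is_RInt_open_plus; [apply is_RInt_open_plus; auto|].
  apply is_RInt_open_scal, is_RInt_open_li_div.
Qed.

Theorem theorem4 :
  exists (Im1 : R) (I : nat -> R) (li_f : R -> R) (J S : R),
    int_T (fun x y => / (x * y * (- ln (x * y)))) Im1 /\
    (forall n : nat, int_T (fun x y => (- ln (x * y)) ^ n / (x * y)) (I n)) /\
    (forall x, 0 < x < 1 -> li_is (x - x ^ 2) (li_f x)) /\
    improper_int (fun x => li_f x / x) 0 1 J /\
    infinite_sum (fun n => (-1) ^ n * I n / INR (Factorial.fact (n + 1))) S /\
    Im1 = S + J + 1.
Proof.
  destruct is_RInt_open_series_integrand as [l Hl].
  destruct is_RInt_open_li_section_div as [J HJ].
  exists (l + J + 1), I_val, (fun x => li (x - x ^ 2)), J, l.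
  split; [|split; [|split; [|split; [|split]]]].
  - exists inner_m1. split; [intros; apply int_section_m1; auto|].
    apply is_RInt_open_improper_int, is_RInt_open_inner_m1; auto.
  - intros n. exists (inner n). split; [intros; apply int_section; auto|].
    apply is_RInt_open_improper_int, I_val_spec.
  - intros x Hx. apply li_is_li. simpl. split; nra.
  - apply is_RInt_open_improper_int.
    apply (is_RInt_open_ext (fun x => li (x * (1 - x)) / x)); auto.
    intros x Hx. replace (x - x ^ 2) with (x * (1 - x)) by ring. reflexivity.
  - apply infinite_sum_series; auto.
  - reflexivity.
Qed.
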